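(* Let $T$ be the log-partition function of a regular minimal exponential family and let the market cost function be $C=T$ (the generalized LMSR). Suppose an agent has exponential utility $U_a(w)=-\frac1a e^{-aw}$ with $a>0$ and belief $p(\cdot;\hat\theta)$ with $\hat\theta\in\Theta$, and the current market state is $\theta\in\Theta$. Then the portfolio $\delta$ maximizing the agent's expected utility of profit $\langle\delta,\phi(x)\rangle-[C(\theta+\delta)-C(\theta)]$ is unique, equal to $\delta=(\hat\theta-\theta)/(1+a)$, so that the new state is $\theta+\delta=\frac{1}{1+a}\hat\theta+\frac{a}{1+a}\theta$.
   Context: Exponential family with sufficient statistic $\phi:\mathcal{X}\to\mathbb{R}^d$ and base measure $\nu$: $p(x;\theta)=\exp(\langle\theta,\phi(x)\rangle-T(\theta))$, $T(\theta)=\log\int_{\mathcal{X}}\exp\langle\theta,\phi(x)\rangle\,d\nu(x)$, $\Theta=\{\theta:T(\theta)<\infty\}$, assumed open (regular) and with no nonzero $\alpha$ making $\langle\alpha,\phi\rangle$ constant $\nu$-a.e. (minimal). In a cost-function market with cost $C$, buying portfolio $\delta$ at state $\theta$ costs $C(\theta+\delta)-C(\theta)$, moves the state to $\theta+\delta$, and pays $\langle\delta,\phi(x)\rangle$ when outcome $x$ occurs. *)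

From HB Require Import structures.
From mathcomp Require Import all_boot all_order all_algebra.
From mathcomp Require Import all_classical all_reals all_analysis.
Set Implicit Arguments. Unset Strict Implicit. Unset Printing Implicit Defensive.
Import Order.TTheory GRing.Theory Num.Theory.
Import numFieldNormedType.Exports.
Local Open Scope classical_set_scope.
Local Open Scope ring_scope.

Section ExpFam.
Context {R : realType} {n : nat} {dX : measure_display} {X : measurableType dX}.
Variables (nu : {measure set X -> \bar R}) (phi : X -> 'rV[R]_n).

Definition dotp (th v : 'rV[R]_n) : R := \sum_(i < n) th 0 i * v 0 i.

Definition partfun (th : 'rV[R]_n) : \bar R :=
  (\int[nu]_x (expR (dotp th (phi x)))%:E)%E.

Definition Theta : set 'rV[R]_n := [set th | (partfun th < +oo)%E].

(* log-partition function T (meaningful on Theta) *)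
Definition logpart (th : 'rV[R]_n) : R := ln (fine (partfun th)).

Definition regular_family : Prop := open Theta.

Definition minimal_family : Prop :=
  forall alpha : 'rV[R]_n,
    (exists c : R, {ae nu, forall x, dotp alpha (phi x) = c}) -> alpha = 0.

Definition density (th : 'rV[R]_n) (x : X) : R :=
  expR (dotp th (phi x) - logpart th).

Definition exp_utility (a w : R) : R := - a^-1 * expR (- a * w).

Definition profit (C : 'rV[R]_n -> R) (th delta : 'rV[R]_n) (x : X) : R :=
  dotp delta (phi x) - (C (th + delta) - C th).

Definition expected_utility (C : 'rV[R]_n -> R) (a : R)
    (thhat th delta : 'rV[R]_n) : \bar R :=
  (\int[nu]_x (exp_utility a (profit C th delta x) * density thhat x)%:E)%E.

End ExpFam.

From HB Require Import structures.
From mathcomp Require Import all_boot all_order all_algebra.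
From mathcomp Require Import all_classical all_reals all_analysis.
From mathcomp Require Import ring lra measurable_realfun.
Import Order.TTheory GRing.Theory Num.Theory.
Import numFieldNormedType.Exports.
Local Open Scope classical_set_scope.
Local Open Scope ring_scope.

(* With [C = T], the expected utility of buying [delta] is
     -(1/a) exp (a T(theta + delta) - a T(theta) - T(thhat)) Z(thhat - a delta),
   where [Z = exp T] is the partition function.  Whatever [delta] is, the two points
   [theta + delta] and [thhat - a delta] have the same convex combination
   [(a theta + thhat) / (1 + a) = theta + dstar], so strict convexity of [T]
   (integrate strict convexity of [exp] against the two normalized densities;
   equality a.e. would contradict minimality) gives
     a T(theta + delta) + T(thhat - a delta) > (1 + a) T(theta + dstar)
   unless the two points coincide, i.e. unless [delta = dstar]. *)

Section dotp.
Context {R : realType} {n : nat}.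
Implicit Types (u v w : 'rV[R]_n) (k : R).

Lemma dotpD u v w : dotp (u + v) w = dotp u w + dotp v w.
Proof. by rewrite /dotp -big_split; apply: eq_bigr => i _; rewrite !mxE mulrDl. Qed.

Lemma dotpZ k u w : dotp (k *: u) w = k * dotp u w.
Proof. by rewrite /dotp mulr_sumr; apply: eq_bigr => i _; rewrite !mxE mulrA. Qed.

Lemma dotpB u v w : dotp (u - v) w = dotp u w - dotp v w.
Proof. by rewrite dotpD -scaleN1r dotpZ mulN1r. Qed.

End dotp.

Lemma expR_convex_lt {R : realType} (s p q : R) : 0 < s < 1 -> p != q ->
  expR (s * p + (1 - s) * q) < s * expR p + (1 - s) * expR q.
Proof.
move=> /andP[s0 s1] pq; set c := s * p + (1 - s) * q.
(* factor out [expR c] and apply [1 + t < expR t] at the two nonzero offsets *)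
have -> : s * expR p + (1 - s) * expR q =
    expR c * (s * expR ((1 - s) * (p - q)) + (1 - s) * expR (- s * (p - q))).
  by rewrite mulrDr !mulrA ![expR c * _]mulrC -!mulrA -!expRD; congr (_ * expR _ + _ * expR _);
     rewrite /c; ring.
rewrite -[ltLHS]mulr1 ltr_pM2l ?expR_gt0 //.
have pq0 : p - q != 0 by rewrite subr_eq0.
have one : 1 = s * (1 + (1 - s) * (p - q)) + (1 - s) * (1 + - s * (p - q)) by ring.
rewrite [ltLHS]one ltr_leD // ?ler_pM2l ?ltr_pM2l ?expR_ge1Dx ?expR_gt1Dx ?subr_gt0 //.
by rewrite mulf_neq0 // subr_eq0 eq_sym; apply/negP => /eqP; lra.
Qed.

Lemma expR_convex_le {R : realType} (s p q : R) : 0 < s < 1 ->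
  expR (s * p + (1 - s) * q) <= s * expR p + (1 - s) * expR q.
Proof.
move=> s01; have [->|pq] := eqVneq p q; last exact/ltW/expR_convex_lt.
by rewrite -mulrDl -mulrDl subrKC !mul1r.
Qed.

Lemma ltr_mix_scale {R : realType} (a x y z : R) : 0 < 1 + a ->
  (x < a / (1 + a) * y + (1 - a / (1 + a)) * z) = ((1 + a) * x < a * y + z).
Proof. by move=> a0; rewrite -(ltr_pM2l a0); congr (_ < _); field; exact: lt0r_neq0. Qed.

Section integral_strict.
Context {d : measure_display} {T : measurableType d} {R : realType}.
Variable mu : {measure set T -> \bar R}.

Lemma ge0_integral_eq0_ae (f : T -> R) : measurable_fun setT f ->
  (forall x, 0 <= f x) -> (\int[mu]_x (f x)%:E = 0)%E -> {ae mu, forall x, f x = 0}.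
Proof.
move=> mf f0 h.
have : (\int[mu]_x `|(f x)%:E| = 0)%E.
  by rewrite -h; apply: eq_integral => x _; rewrite gee0_abs // lee_fin.
move/(ae_eq_integral_abs mu measurableT ((measurable_EFinP _ _).2 mf)).
by apply: filterS => x /(_ I) [].
Qed.

Lemma ge0_lt_integral (f g : T -> R) :
  measurable_fun setT f -> measurable_fun setT g ->
  (forall x, 0 <= f x <= g x) -> (\int[mu]_x (f x)%:E < +oo)%E ->
  ~ {ae mu, forall x, f x = g x} ->
  (\int[mu]_x (f x)%:E < \int[mu]_x (g x)%:E)%E.
Proof.
move=> mf mg fg If_fin not_ae.
have f0 x : 0 <= f x by case/andP: (fg x).
have gf0 x : 0 <= g x - f x by rewrite subr_ge0; case/andP: (fg x).
have mgf : measurable_fun setT (fun x => g x - f x) by exact: measurable_funB.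
have -> : (\int[mu]_x (g x)%:E = \int[mu]_x (f x)%:E + \int[mu]_x (g x - f x)%:E)%E.
  rewrite -ge0_integralD //; last 4 first.
  - by move=> x _; rewrite lee_fin.
  - exact/measurable_EFinP.
  - by move=> x _; rewrite lee_fin.
  - exact/measurable_EFinP.
  by apply: eq_integral => x _; rewrite -EFinD subrKC.
have Igf_gt0 : (0 < \int[mu]_x (g x - f x)%:E)%E.
  rewrite lt0e integral_ge0 ?andbT => [|x _]; last by rewrite lee_fin.
  apply/negP => /eqP /(ge0_integral_eq0_ae _ mgf gf0) gf_ae; apply: not_ae.
  by apply: filterS gf_ae => x /eqP; rewrite subr_eq0 => /eqP.
by rewrite lteDl // ge0_fin_numE //; apply: integral_ge0 => x _; rewrite lee_fin.
Qed.

End integral_strict.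

Section exponential_family.
Context {R : realType} {n : nat} {dX : measure_display} {X : measurableType dX}.
Variables (nu : {measure set X -> \bar R}) (phi : X -> 'rV[R]_n).
Hypothesis phi_meas : forall i : 'I_n, measurable_fun setT (fun x => phi x 0 i).

Lemma measurable_dotp (v : 'rV[R]_n) : measurable_fun setT (fun x => dotp v (phi x)).
Proof. by apply: measurable_sum => i; apply: measurable_funM => //; exact: phi_meas. Qed.

Lemma measurable_expR_dotp (v : 'rV[R]_n) :
  measurable_fun setT (fun x => expR (dotp v (phi x))).
Proof. exact: measurableT_comp (measurable_dotp v). Qed.

Lemma partfun_ge0 (v : 'rV[R]_n) : (0 <= partfun nu phi v)%E.
Proof. by apply: integral_ge0 => x _; rewrite lee_fin expR_ge0. Qed.

Lemma Theta_partfunE (v : 'rV[R]_n) :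
  Theta nu phi v -> partfun nu phi v = (fine (partfun nu phi v))%:E.
Proof. by move=> Tv; rewrite fineK // ge0_fin_numE ?partfun_ge0. Qed.

Lemma partfun_logpartE (v : 'rV[R]_n) : Theta nu phi v ->
  0 < fine (partfun nu phi v) -> partfun nu phi v = (expR (logpart nu phi v))%:E.
Proof. by move=> Tv Z0; rewrite /logpart lnK ?posrE // -Theta_partfunE. Qed.

Lemma partfun_eq0_ae (v : 'rV[R]_n) (P : X -> Prop) :
  partfun nu phi v = 0%E -> {ae nu, forall x, P x}.
Proof.
move=> /(ge0_integral_eq0_ae nu _ (measurable_expR_dotp v) (fun x => expR_ge0 _)).
by apply: filterS => x h; have := expR_gt0 (dotp v (phi x)); rewrite h ltxx.
Qed.

Lemma minimal_partfun_gt0 (alpha v : 'rV[R]_n) : minimal_family nu phi ->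
  alpha != 0 -> Theta nu phi v -> 0 < fine (partfun nu phi v).
Proof.
move=> Hmin alpha0 Tv; have := partfun_ge0 v.
rewrite Theta_partfunE // lee_fin le_eqVlt => /orP[/eqP Z0|//].
case/eqP: alpha0; apply: Hmin; exists 0; apply: (partfun_eq0_ae v).
by rewrite Theta_partfunE // -Z0.
Qed.

Lemma integral_expR_dotpZ (k : R) (v : 'rV[R]_n) : 0 <= k ->
  (\int[nu]_x (k * expR (dotp v (phi x)))%:E = k%:E * partfun nu phi v)%E.
Proof.
move=> k0; rewrite -(ge0_integralZl_EFin _ _ _ _ k0) //.
exact/measurable_EFinP/measurable_expR_dotp.
Qed.

Lemma integral_expR_dotpD (k l : R) (u w : 'rV[R]_n) : 0 <= k -> 0 <= l ->
  (\int[nu]_x (k * expR (dotp u (phi x)) + l * expR (dotp w (phi x)))%:E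
   = k%:E * partfun nu phi u + l%:E * partfun nu phi w)%E.
Proof.
move=> k0 l0; rewrite -!integral_expR_dotpZ // -ge0_integralD //.
- by move=> x _; rewrite lee_fin mulr_ge0 ?expR_ge0.
- by apply/measurable_EFinP/measurable_funM => //; exact: measurable_expR_dotp.
- by move=> x _; rewrite lee_fin mulr_ge0 ?expR_ge0.
- by apply/measurable_EFinP/measurable_funM => //; exact: measurable_expR_dotp.
Qed.

Lemma Theta_convex (s : R) (u w : 'rV[R]_n) : 0 < s < 1 ->
  Theta nu phi u -> Theta nu phi w -> Theta nu phi (s *: u + (1 - s) *: w).
Proof.
move=> s01 Tu Tw; have /andP[s0 s1] := s01.
suff Zle : (partfun nu phi (s *: u + (1 - s) *: w) <=
    (s * fine (partfun nu phi u) + (1 - s) * fine (partfun nu phi w))%:E)%E.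
  exact: le_lt_trans Zle (ltry _).
rewrite EFinD !EFinM -!Theta_partfunE // -integral_expR_dotpD ?subr_ge0 ?(ltW s0) ?(ltW s1) //.
apply: (ge0_le_integral nu measurableT).
- by move=> x _; rewrite lee_fin expR_ge0.
- exact/measurable_EFinP/measurable_expR_dotp.
- apply/measurable_EFinP/measurable_funD; apply: measurable_funM => //;
    exact: measurable_expR_dotp.
- by move=> x _; rewrite lee_fin dotpD !dotpZ expR_convex_le.
Qed.

Lemma integral_expR_mix (s cu cw : R) (u w : 'rV[R]_n) :
  (\int[nu]_x (expR (s * (dotp u (phi x) - cu) + (1 - s) * (dotp w (phi x) - cw)))%:E
   = (expR (- (s * cu + (1 - s) * cw)))%:E * partfun nu phi (s *: u + (1 - s) *: w))%E.
Proof.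
rewrite -integral_expR_dotpZ ?expR_ge0 //.
apply: eq_integral => x _; rewrite -expRD dotpD !dotpZ; congr (expR _)%:E.
by move: (dotp u _) (dotp w _) => a b; ring.
Qed.

Lemma integral_density_mix (s : R) (u w : 'rV[R]_n) : 0 <= s <= 1 ->
  Theta nu phi u -> Theta nu phi w ->
  0 < fine (partfun nu phi u) -> 0 < fine (partfun nu phi w) ->
  (\int[nu]_x (s * density nu phi u x + (1 - s) * density nu phi w x)%:E = 1)%E.
Proof.
move=> /andP[s0 s1] Tu Tw Zu Zw.
transitivity (\int[nu]_x ((s * expR (- logpart nu phi u)) * expR (dotp u (phi x))
    + ((1 - s) * expR (- logpart nu phi w)) * expR (dotp w (phi x)))%:E)%E.
  apply: eq_integral => x _; congr EFin; rewrite /density.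
  (* generalizing [logpart] keeps unification from unfolding the integral *)
  move: (dotp u _) (dotp w _) (logpart nu phi u) (logpart nu phi w) => a b cu cw.
  by rewrite !expRD; ring.
rewrite integral_expR_dotpD; last 2 first.
- exact: mulr_ge0 s0 (expR_ge0 _).
- by rewrite mulr_ge0 ?subr_ge0 ?expR_ge0.
rewrite (partfun_logpartE u) // (partfun_logpartE w) // -EFinD; congr EFin.
move: (logpart nu phi u) (logpart nu phi w) => cu cw.
by rewrite -!mulrA -!expRD !addNr expR0 !mulr1 subrKC.
Qed.

Lemma logpart_lt_convex (s : R) (u w : 'rV[R]_n) : minimal_family nu phi ->
  0 < s < 1 -> Theta nu phi u -> Theta nu phi w -> u != w ->
  logpart nu phi (s *: u + (1 - s) *: w)
    < s * logpart nu phi u + (1 - s) * logpart nu phi w.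
Proof.
move=> Hmin s01 Tu Tw uw; have /andP[s0 s1] := s01.
set m := s *: u + (1 - s) *: w.
have Tm : Theta nu phi m by exact: Theta_convex.
have uw0 : u - w != 0 by rewrite subr_eq0.
have Z_gt0 v : Theta nu phi v -> 0 < fine (partfun nu phi v).
  exact: minimal_partfun_gt0 _ _ Hmin uw0.
pose p x := dotp u (phi x) - logpart nu phi u.
pose q x := dotp w (phi x) - logpart nu phi w.
have mp : measurable_fun setT p by apply: measurable_funB => //; exact: measurable_dotp.
have mq : measurable_fun setT q by apply: measurable_funB => //; exact: measurable_dotp.
have Imix := integral_expR_mix s (logpart nu phi u) (logpart nu phi w) u w.
have s01' : 0 <= s <= 1 by rewrite !ltW.
have Idens := @integral_density_mix s u w s01' Tu Tw (Z_gt0 _ Tu) (Z_gt0 _ Tw).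
have : (\int[nu]_x (expR (s * p x + (1 - s) * q x))%:E
        < \int[nu]_x (s * density nu phi u x + (1 - s) * density nu phi w x)%:E)%E.
  apply: ge0_lt_integral.
  - exact: measurableT_comp (@measurable_expR R) (measurable_funD
      (measurable_funM (measurable_cst s) mp) (measurable_funM (measurable_cst (1 - s)) mq)).
  - exact: measurable_funD
      (measurable_funM (measurable_cst s) (measurableT_comp (@measurable_expR R) mp))
      (measurable_funM (measurable_cst (1 - s)) (measurableT_comp (@measurable_expR R) mq)).
  - by move=> x; rewrite expR_ge0 expR_convex_le.
  - by rewrite Imix (Theta_partfunE m) // ltry.
  (* equality a.e. forces [p = q] a.e., i.e. [<u - w, phi>] is a.e. constant *)
  move=> eq_ae; case/eqP: uw0; apply: Hmin.
  exists (logpart nu phi u - logpart nu phi w); apply: filterS eq_ae => x.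
  have [pq _|pq] := eqVneq (p x) (q x).
    rewrite dotpB; move: pq; rewrite /p /q.
    move: (dotp u _) (dotp w _) (logpart nu phi u) (logpart nu phi w) => a b cu cw.
    by move/eqP; lra.
  by move=> eq_x; have := @expR_convex_lt _ s _ _ s01 pq; rewrite /density eq_x ltxx.
rewrite Imix Idens (partfun_logpartE m) ?Z_gt0 // -EFinM lte_fin -expRD.
by rewrite -expR0 ltr_expR addrC subr_lt0.
Qed.

Lemma expected_utility_partfun (a : R) (thhat th delta : 'rV[R]_n) : 0 < a ->
  expected_utility nu phi (logpart nu phi) a thhat th delta =
  (- ((a^-1 * expR (a * logpart nu phi (th + delta) - a * logpart nu phi th
        - logpart nu phi thhat))%:E * partfun nu phi (thhat - a *: delta)))%E.
Proof.
move=> a0; set k := a^-1 * _.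
have k0 : 0 <= k by rewrite mulr_ge0 ?expR_ge0 ?invr_ge0 ?ltW.
rewrite -integral_expR_dotpZ // -integral_ge0N => [|x _]; last first.
  by rewrite lee_fin mulr_ge0 ?expR_ge0.
apply: eq_integral => x _; rewrite -EFinN; congr EFin.
rewrite /exp_utility /profit /density /k dotpB dotpZ !mulNr -!mulrA -!expRD.
congr (- (_ * expR _)).
move: (dotp _ _) (dotp _ _) (logpart _ _ _) (logpart _ _ _) (logpart _ _ _) => b c d e f.
ring.
Qed.

End exponential_family.

Section optimal_portfolio.
Context {R : realType} {n : nat}.
Variables (a : R) (thhat th : 'rV[R]_n).
Hypothesis a1 : 1 + a != 0.

Local Notation dstar := ((1 + a)^-1 *: (thhat - th)).

Lemma optimal_state_convex :
  th + dstar = (1 + a)^-1 *: thhat + (a / (1 + a)) *: th.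
Proof. by apply/rowP => i; rewrite !mxE; field. Qed.

Lemma optimal_state_mix (delta : 'rV[R]_n) :
  th + dstar = (a / (1 + a)) *: (th + delta) + (1 - a / (1 + a)) *: (thhat - a *: delta).
Proof. by apply/rowP => i; rewrite !mxE; field. Qed.

Lemma optimal_state_shift : thhat - a *: dstar = th + dstar.
Proof. by apply/rowP => i; rewrite !mxE; field. Qed.

Lemma trade_gapE (delta : 'rV[R]_n) :
  (th + delta) - (thhat - a *: delta) = (1 + a) *: (delta - dstar).
Proof. by apply/rowP => i; rewrite !mxE; field. Qed.

End optimal_portfolio.

Theorem theorem3 (R : realType) (n : nat) (dX : measure_display)
  (X : measurableType dX) (nu : {measure set X -> \bar R})
  (phi : X -> 'rV[R]_n)
  (phi_meas : forall i : 'I_n, measurable_fun setT (fun x => phi x 0 i))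
  (Hreg : regular_family nu phi) (Hmin : minimal_family nu phi)
  (a : R) (Ha : 0 < a) (thhat th : 'rV[R]_n)
  (Hthhat : Theta nu phi thhat) (Hth : Theta nu phi th) :
  let C := logpart nu phi in
  let dstar := (1 + a)^-1 *: (thhat - th) in
  [/\ Theta nu phi (th + dstar),
      th + dstar = (1 + a)^-1 *: thhat + (a / (1 + a)) *: th &
      forall delta : 'rV[R]_n, Theta nu phi (th + delta) -> delta <> dstar ->
        (expected_utility nu phi C a thhat th delta
          < expected_utility nu phi C a thhat th dstar)%E].
Proof.
move=> C dstar.
have a1_gt0 : 0 < 1 + a by rewrite addr_gt0.
have a1 : 1 + a != 0 by rewrite gt_eqF.
have s01 : 0 < a / (1 + a) < 1 by rewrite divr_gt0 //= ltr_pdivrMr // mul1r ltrDr.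
have Tm : Theta nu phi (th + dstar).
  by rewrite (optimal_state_mix a thhat th a1 0) scaler0 subr0 addr0; apply: Theta_convex.
split=> [//||delta Tu neq_delta]; first exact: optimal_state_convex.
set w := thhat - a *: delta.
have uw : th + delta - w != 0.
  by rewrite trade_gapE // scaler_eq0 negb_or a1 subr_eq0; apply/eqP.
rewrite /C !expected_utility_partfun // optimal_state_shift // lteN2.
have [Zw|Zw] := eqVneq (partfun nu phi w) +oo%E.
  rewrite Zw (Theta_partfunE _ _ _ Tm); apply: lt_le_trans (ltry _) _.
  by rewrite gt0_muley // lte_fin mulr_gt0 ?invr_gt0 ?expR_gt0.
have Tw : Theta nu phi w by rewrite /Theta /= lt_neqAle Zw leey.
have Z_gt0 v : Theta nu phi v -> 0 < fine (partfun nu phi v).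
  exact: minimal_partfun_gt0 _ _ phi_meas _ _ Hmin uw.
have lt_mix : (1 + a) * logpart nu phi (th + dstar)
    < a * logpart nu phi (th + delta) + logpart nu phi w.
  rewrite -ltr_mix_scale // (optimal_state_mix a thhat th a1 delta).
  by apply: logpart_lt_convex; rewrite // -subr_eq0.
rewrite (partfun_logpartE _ _ _ Tw (Z_gt0 _ Tw)) (partfun_logpartE _ _ _ Tm (Z_gt0 _ Tm)).
rewrite -[ltLHS]EFinM -[ltRHS]EFinM lte_fin -[ltLHS]mulrA -[ltRHS]mulrA.
rewrite ltr_pM2l ?invr_gt0 // -[ltLHS]expRD -[ltRHS]expRD ltr_expR.
move: lt_mix; move: (logpart nu phi (th + dstar)) (logpart nu phi (th + delta)).
move: (logpart nu phi w) (logpart nu phi th) (logpart nu phi thhat) => tw t0 th0 tm tu.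
by rewrite mulrDl mul1r; lra.
Qed.
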